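(* Let $P_1$ be a set of $n_1$ points and $P_2$ a set of $n_2$ points in the plane, each in general position, with $n_1,n_2$ even, and let $G_1$ and $G_2$ be their underlying graphs. Then there exist a set $P$ of $n_1+n_2$ points in the plane in general position and a partition $P=Q_1\sqcup Q_2$ such that the underlying graph of $P$ is the disjoint union of two graphs on $Q_1$ and $Q_2$, with no edges between $Q_1$ and $Q_2$, that are isomorphic to $G_1$ and $G_2$ respectively.
   Context: Points are in general position if no three are collinear. For a finite set $P$ of $n$ points in general position with $n$ even, a halving line of $P$ is a line through two points of $P$ that has exactly $(n-2)/2$ points of $P$ strictly on each side. The underlying graph of $P$ has vertex set $P$, and two points are adjacent if and only if the line through them is a halving line of $P$. *)

From HB Require Import structures.
From mathcomp Require Import all_boot all_order all_algebra.
Set Implicit Arguments. Unset Strict Implicit. Unset Printing Implicit Defensive.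
Import Order.TTheory GRing.Theory Num.Theory.
Local Open Scope ring_scope.

Definition point (R : realFieldType) := (R * R)%type.

(* Signed area (orientation) of the triple p q r; zero iff collinear. *)
Definition orient (R : realFieldType) (p q r : point R) : R :=
  (q.1 - p.1) * (r.2 - p.2) - (q.2 - p.2) * (r.1 - p.1).

(* A finite point set is given by a duplicate-free list. General position:
   no three distinct points are collinear. *)
Definition general_position (R : realFieldType) (P : seq (point R)) : Prop :=
  uniq P /\
  forall p q r, p \in P -> q \in P -> r \in P ->
    p != q -> q != r -> p != r -> orient p q r != 0.

(* The line through p and q (p, q in P, distinct) is a halving line of P:
   exactly (n-2)/2 points of P strictly on each side. *)
Definition halving (R : realFieldType) (P : seq (point R)) (p q : point R) : bool :=
  [&& p \in P, q \in P, p != q,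
      count (fun x => 0 < orient p q x) P == ((size P - 2) %/ 2)%N &
      count (fun x => orient p q x < 0) P == ((size P - 2) %/ 2)%N].

(* f is a graph isomorphism from the underlying graph of P1 onto the graph
   induced by the underlying graph of P on the subset Q. *)
Definition iso_onto (R : realFieldType) (P1 P Q : seq (point R))
    (f : point R -> point R) : Prop :=
  {in P1 &, injective f} /\ perm_eq (map f P1) Q /\
  forall a b, a \in P1 -> b \in P1 -> halving P1 a b = halving P (f a) (f b).

From HB Require Import structures.
From mathcomp Require Import all_boot all_order all_algebra.
From mathcomp Require Import ring lra zify.
Import Order.TTheory GRing.Theory Num.Theory.
Local Open Scope ring_scope.

(* Any set P of 2m distinct points can be balanced: there is an affine
   functional lin(p) = p.1 + t * p.2 - s that is injective on P, vanishes
   nowhere on P and is negative on exactly m of its points (exists_balanced).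
   The affine map squeeze_e : p |-> (lin p, e * p.2), of determinant e > 0,
   flattens P1 onto the x-axis, m1 points on each side of the origin;
   composed with the reflection mirror (x, y) = (y, x) the same construction
   flattens P2 onto the y-axis.  For e small enough (for_small), the
   orientation of every triple meeting both parts has the sign of its limit at
   e = 0 (mixed_signs).  Consequently the union is in general position, a line
   through two points of one part splits the other part evenly, so the halving
   lines inside a part are exactly the old ones, and a line through one point
   of each part has at least m1 + m2 points on one side, so it is not halving.
   Since mirror exchanges the two parts, the statement about the halving
   lines of P2 is obtained from the one about P1 (cross_iso_right). *)

Section Orientation.
Local Set Implicit Arguments.
Local Unset Strict Implicit.
Variable R : realFieldType.
Implicit Types (p q r x y z : point R) (P A B : seq (point R)).

Lemma orient_cyc p q r : orient p q r = orient q r p.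
Proof. by rewrite /orient; ring. Qed.

Lemma orient_pp p r : orient p p r = 0.
Proof. by rewrite /orient; ring. Qed.

Definition mirror p : point R := (p.2, p.1).

Lemma mirrorK : involutive mirror. Proof. by case. Qed.

Lemma orient_mirror p q r : orient (mirror p) (mirror q) (mirror r) = - orient p q r.
Proof. by rewrite /orient /mirror /=; ring. Qed.

Lemma halving_perm P P' a b : perm_eq P P' -> halving P a b = halving P' a b.
Proof.
move=> pP; have /permP cnt := pP.
by rewrite /halving !(perm_mem pP) !cnt (perm_size pP).
Qed.

(* A reflection exchanges the two sides of every line, so halving lines are
   preserved. *)
Lemma halving_mirror P a b :
  halving (map mirror P) (mirror a) (mirror b) = halving P a b.
Proof.
have mirror_inj : injective mirror := can_inj mirrorK.
rewrite /halving !mem_map // (inj_eq mirror_inj) size_map !count_map.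
rewrite (eq_count (a2 := fun x => orient a b x < 0)); last first.
  by move=> x /=; rewrite orient_mirror oppr_gt0.
rewrite (eq_count (a1 := preim _ _) (a2 := fun x => 0 < orient a b x)); last first.
  by move=> x /=; rewrite orient_mirror oppr_lt0.
by rewrite [X in _ && (_ && (_ && X))]andbC.
Qed.

(* General position of a union A ++ B reduces, by cyclic symmetry of the
   orientation, to triples whose first two points lie in the same part. *)
Lemma general_position_cat A B : uniq (A ++ B) ->
  (forall x y z, x \in A -> y \in A -> z \in A ++ B ->
     x != y -> y != z -> x != z -> orient x y z != 0) ->
  (forall x y z, x \in B -> y \in B -> z \in A ++ B ->
     x != y -> y != z -> x != z -> orient x y z != 0) ->
  general_position (A ++ B).
Proof.
move=> uAB HA HB; split=> // x y z xAB yAB zAB xy yz xz.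
have rot1 : orient x y z = orient y z x := orient_cyc x y z.
have rot2 : orient x y z = orient z x y by rewrite [RHS]orient_cyc.
move: (xAB) (yAB) (zAB); rewrite !mem_cat.
case/orP=> [xA|xB] /orP[yA|yB] /orP[zA|zB].
- exact: HA.
- exact: HA.
- by rewrite rot2 HA // eq_sym.
- by rewrite rot1 HB // eq_sym.
- by rewrite rot1 HA // eq_sym.
- by rewrite rot2 HB // eq_sym.
- exact: HB.
- exact: HB.
Qed.

End Orientation.

Arguments mirror {R}.
Arguments mirrorK {R}.

Section SmallParameter.
Local Set Implicit Arguments.
Local Unset Strict Implicit.
Variable R : realFieldType.
Implicit Types (Q : R -> Prop) (c d : R).

Definition for_small Q := exists2 e0 : R, 0 < e0 & forall e, 0 < e -> e <= e0 -> Q e.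

Lemma for_small_and Q1 Q2 :
  for_small Q1 -> for_small Q2 -> for_small (fun e => Q1 e /\ Q2 e).
Proof.
move=> [e1 e1_gt0 H1] [e2 e2_gt0 H2]; exists (Num.min e1 e2).
  by rewrite lt_min e1_gt0 e2_gt0.
by move=> e e_gt0; rewrite le_min => /andP[le1 le2]; split; [apply: H1 | apply: H2].
Qed.

Lemma for_small_all (T : eqType) (s : seq T) (Q : T -> R -> Prop) :
  (forall x, x \in s -> for_small (Q x)) ->
  for_small (fun e => forall x, x \in s -> Q x e).
Proof.
elim: s => [|y s IH] Hs; first by exists 1 => // e _ _ x; rewrite in_nil.
have Hy := Hs y (mem_head y s).
have /IH {}IH : forall x, x \in s -> for_small (Q x).
  by move=> x xs; apply: Hs; rewrite in_cons xs orbT.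
have [e0 e0_gt0 He] := for_small_and Hy IH.
exists e0 => // e e_gt0 le_e x; have [Qy Qs] := He e e_gt0 le_e.
by rewrite in_cons => /predU1P[->|/Qs].
Qed.

Lemma for_small_imp (b : bool) Q :
  (b -> for_small Q) -> for_small (fun e => b -> Q e).
Proof.
case: b => [/(_ isT) [e0 e0_gt0 He]|_]; last by exists 1.
by exists e0 => // e e_gt0 le_e _; apply: He.
Qed.

Lemma for_small_weaken Q1 Q2 :
  (forall e, Q1 e -> Q2 e) -> for_small Q1 -> for_small Q2.
Proof. by move=> Q12 [e0 e0_gt0 He]; exists e0 => // e e_gt0 /He/Q12; apply. Qed.

Definition same_sign (x c : R) := ((0 < x) = (0 < c)) /\ ((x < 0) = (c < 0)).

Lemma same_sign_neq0 (x c : R) : same_sign x c -> c != 0 -> x != 0.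
Proof. by case=> pos neg; rewrite !neq_lt pos neg orbC. Qed.

Lemma same_sign_opp (x c : R) : same_sign x c -> same_sign (- x) (- c).
Proof. by case=> pos neg; rewrite /same_sign !oppr_gt0 !oppr_lt0. Qed.

Lemma same_sign_perturb c d : `|d| < `|c| -> same_sign (c + d) c.
Proof.
move=> small_d; have := ler_norm d; have := ler_norm (- d).
rewrite normrN => hn hp; have [c_lt0|c_gt0|c_eq0] := ltgtP c 0.
- have cd_lt0 : c + d < 0 by rewrite (ltr0_norm c_lt0) in small_d; lra.
  by rewrite /same_sign c_lt0 cd_lt0 (lt_gtF c_lt0) (lt_gtF cd_lt0).
- have cd_gt0 : 0 < c + d by rewrite (gtr0_norm c_gt0) in small_d; lra.
  by rewrite /same_sign c_gt0 cd_gt0 (lt_gtF c_gt0) (lt_gtF cd_gt0).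
- by move: small_d; rewrite c_eq0 normr0 normr_lt0.
Qed.

Lemma for_small_quadratic c0 c1 c2 : c0 != 0 ->
  for_small (fun e => `|c1 * e + c2 * e ^+ 2| < `|c0|).
Proof.
move=> c0_neq0; have c0_gt0 : 0 < `|c0| by rewrite normr_gt0.
have a_ge0 := normr_ge0 c1; have b_ge0 := normr_ge0 c2.
pose K := `|c1| + `|c2| + 1; have K_gt0 : 0 < K by rewrite /K; lra.
exists (Num.min 1 (`|c0| / (2 * K))); first by rewrite lt_min ltr01 divr_gt0 ?mulr_gt0.
move=> e e_gt0; rewrite le_min => /andP[e_le1].
rewrite ler_pdivlMr ?mulr_gt0 // => Ke_small.
have e2_le : `|c2| * e ^+ 2 <= `|c2| * e by rewrite ler_wpM2l // expr2 ler_piMl // ltW.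
apply: (le_lt_trans (ler_normD _ _)); rewrite !normrM (gtr0_norm e_gt0) -expr2.
by move: Ke_small; rewrite /K; lra.
Qed.

Lemma for_small_sign (F : R -> R) c0 c1 c2 :
  (forall e, F e = c0 + (c1 * e + c2 * e ^+ 2)) -> c0 != 0 ->
  for_small (fun e => same_sign (F e) c0).
Proof.
move=> FE c0_neq0; apply: for_small_weaken (for_small_quadratic c1 c2 c0_neq0).
by move=> e; rewrite FE; apply: same_sign_perturb.
Qed.

End SmallParameter.

Section SignCounting.
Local Set Implicit Arguments.
Local Unset Strict Implicit.
Variable R : realFieldType.

Lemma count_same_sign (T : eqType) (s : seq T) (F G : T -> R) :
  (forall x, x \in s -> same_sign (F x) (G x)) ->
  (count (fun x => 0 < F x) s = count (fun x => 0 < G x) s) *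
  (count (fun x => F x < 0) s = count (fun x => G x < 0) s).
Proof. by move=> FG; split; apply: eq_in_count => x /FG[]. Qed.

Lemma count_scale (T : Type) (s : seq T) (w : T -> R) (d : R) (m : nat) :
  d != 0 -> count (fun x => w x < 0) s = m -> count (fun x => 0 < w x) s = m ->
  (count (fun x => 0 < d * w x) s = m) * (count (fun x => d * w x < 0) s = m).
Proof.
move=> d_neq0 cn cp.
have [d_lt0|d_gt0|d0] := ltgtP d 0; last by rewrite d0 eqxx in d_neq0.
- by rewrite -{1}cn -cp; split; apply: eq_count => x /=; rewrite ?nmulr_rgt0 ?nmulr_rlt0.
- by rewrite -{1}cp -cn; split; apply: eq_count => x /=; rewrite ?pmulr_rgt0 ?pmulr_rlt0.
Qed.

(* If w takes m negative and m positive values and u != 0, then u - w x has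
   the sign of u for at least m of the x: those with w x of sign opposite to u. *)
Lemma count_gap (T : Type) (s : seq T) (w : T -> R) (m : nat) (u : R) :
  count (fun x => w x < 0) s = m -> count (fun x => 0 < w x) s = m -> u != 0 ->
  (m <= count (fun x => (0 < (u - w x) * u)%R) s)%N.
Proof.
move=> cn cp; rewrite neq_lt => /orP[u_lt0|u_gt0].
- rewrite -{1}cp; apply: sub_count => x /= wx_gt0.
  by rewrite nmulr_lgt0 // subr_lt0 (lt_trans u_lt0).
- rewrite -{1}cn; apply: sub_count => x /= wx_lt0.
  by rewrite pmulr_lgt0 // subr_gt0 (lt_trans wx_lt0).
Qed.

Lemma pos_mul_transfer (x u v : R) : 0 < u * v -> (0 < x * v) = (0 < x * u).
Proof.
move=> uv_gt0.
have [u_lt0|u_gt0|u0] := ltgtP u 0; last by rewrite u0 mul0r ltxx in uv_gt0.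
- have v_lt0 : v < 0 by rewrite -(nmulr_rgt0 _ u_lt0).
  by rewrite !nmulr_lgt0.
- have v_gt0 : 0 < v by rewrite -(pmulr_rgt0 _ u_gt0).
  by rewrite !pmulr_lgt0.
Qed.

Lemma neg_mul_transfer (x u v : R) : u * v < 0 -> (x * v < 0) = (0 < x * u).
Proof.
move=> uv_lt0; rewrite -oppr_gt0 -mulrN (pos_mul_transfer x (u := u)) //.
by rewrite mulrN oppr_gt0.
Qed.

(* Arithmetic of the halving threshold (n - 2) / 2 for n = 2 m1 + 2 m2. *)
Lemma half_shift (m1 m2 c : nat) : (0 < m1)%N ->
  (c + m2 == (m1 + m1 + (m2 + m2) - 2) %/ 2)%N = (c == (m1 + m1 - 2) %/ 2)%N.
Proof. by move=> m1_gt0; apply/eqP/eqP; lia. Qed.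

Lemma half_excess (m1 m2 c : nat) : (0 < m1)%N -> (m1 + m2 <= c)%N ->
  c <> ((m1 + m1 + (m2 + m2) - 2) %/ 2)%N.
Proof. by move=> m1_gt0 le_c; lia. Qed.

Lemma half_size_gt0 (T : eqType) (s : seq T) (x : T) (m : nat) :
  x \in s -> size s = (m + m)%N -> (0 < m)%N.
Proof. by case: s => // y s _ /= sz; lia. Qed.

End SignCounting.

Section Balancing.
Local Set Implicit Arguments.
Local Unset Strict Implicit.
Variable R : realFieldType.
Implicit Types (P : seq (point R)) (l : seq R).

Lemma exists_bound l : exists t, forall x, x \in l -> `|x| < t.
Proof.
elim: l => [|y l [t Ht]]; first by exists 0.
exists (Num.max t (`|y| + 1)) => x; rewrite in_cons lt_max => /predU1P[->|/Ht->//].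
by rewrite ltrDl ltr01 orbT.
Qed.

(* Some direction separates the points of P: p |-> p.1 + t * p.2 is
   injective on P as soon as t avoids the finitely many slopes (q.1 - p.1) /
   (p.2 - q.2). *)
Lemma injective_direction P :
  exists t, {in P &, injective (fun p : point R => p.1 + t * p.2)}.
Proof.
have [t Ht] := exists_bound [seq (q.1 - p.1) / (p.2 - q.2) | p <- P, q <- P].
exists t => -[p1 p2] [q1 q2] pP qP /= eq_pq.
have [e2|ne2] := eqVneq p2 q2; first by rewrite e2 in eq_pq *; congr pair; lra.
have := Ht _ (allpairs_f (fun p q : point R => (q.1 - p.1) / (p.2 - q.2)) pP qP).
have -> : (q1 - p1) / (p2 - q2) = t.
  by apply: (mulIf (_ : p2 - q2 != 0)); rewrite ?subr_eq0 // mulfVK ?subr_eq0 //; lra.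
by rewrite ltNge ler_norm.
Qed.

Lemma count_split l c : c \notin l ->
  (count (fun x => (x < c)%R) l + count (fun x => (c < x)%R) l)%N = size l.
Proof.
move=> cl; rewrite -(count_predC (fun x : R => x < c)); congr addn.
apply: eq_in_count => x xl /=; rewrite lt_neqAle leNgt eq_sym.
by have -> : x != c by apply: contraNneq cl => <-.
Qed.

(* 2m distinct reals are split evenly by the midpoint between the m-th and
   the (m+1)-th smallest of them. *)
Lemma median_gap l m : uniq l -> size l = (m + m)%N ->
  exists c, c \notin l /\ count (fun x => x < c) l = m.
Proof.
move=> ul; case: m => [|m] sl; first by exists 0; move/size0nil: sl => ->.
set s := sort <=%O l.
have ls : perm_eq s l by apply/permPl/perm_sort.
have ss : sorted <%O s by rewrite sort_lt_sorted.
have sz : size s = (m.+1 + m.+1)%N by rewrite size_sort.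
pose a := nth 0 s m; pose b := nth 0 s m.+1; pose c := (a + b) / 2.
have ab : a < b by rewrite /a /b (lt_sorted_ltn_nth 0 ss) ?inE //; rewrite ?sz; lia.
have above i : (i < size s)%N -> (m < i)%N -> c < nth 0 s i.
  move=> ilt mi; have : b <= nth 0 s i.
    by rewrite /b (lt_sorted_leq_nth 0 ss) ?inE //; rewrite ?sz; lia.
  by rewrite /c; lra.
have below i : (i < size s)%N -> (nth 0 s i < c) = (i <= m)%N.
  move=> ilt; apply/idP/idP => [|im].
    by apply: contraTT; rewrite -ltnNge -leNgt => /(above _ ilt)/ltW.
  have : nth 0 s i <= a by rewrite /a (lt_sorted_leq_nth 0 ss) ?inE //; rewrite ?sz; lia.
  by rewrite /c; lra.
exists c; split.
  rewrite -(perm_mem ls); apply/negP => cs.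
  have ilt : (index c s < size s)%N by rewrite index_mem.
  have := below _ ilt; have := above _ ilt; rewrite nth_index // ltxx.
  by move=> no_above no_below; move: no_above; rewrite ltnNge -no_below => /(_ isT).
rewrite -(permP ls) -(mkseq_nth 0 s) /mkseq count_map.
rewrite (eq_in_count (a2 := fun i => (i < 0 + m.+1)%N)); last first.
  by move=> i; rewrite mem_iota /= => ilt; rewrite below.
by rewrite -size_filter filter_iota_ltn ?size_iota // sz; lia.
Qed.

Definition lin (t s : R) (p : point R) : R := p.1 + t * p.2 - s.

Definition balanced P (t s : R) (m : nat) :=
  [/\ {in P &, injective (lin t s)}, {in P, forall p, lin t s p != 0},
      count (fun p => lin t s p < 0) P = m & count (fun p => 0 < lin t s p) P = m].

Lemma exists_balanced P m : uniq P -> size P = (m + m)%N ->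
  exists t s, balanced P t s m.
Proof.
move=> uP sP; have [t inj] := injective_direction P.
pose v (p : point R) := p.1 + t * p.2.
have uv : uniq (map v P) by rewrite map_inj_in_uniq.
have [s [sv cnt_below]] := median_gap uv (etrans (size_map v P) sP).
have lin_v p : lin t s p = v p - s by [].
exists t, s; split.
- by move=> p q pP qP; rewrite !lin_v => /addIr; apply: inj.
- move=> p pP; rewrite lin_v subr_eq0; apply: contraNneq sv => <-.
  exact: map_f.
- by rewrite -cnt_below count_map; apply: eq_count => p; rewrite /= lin_v subr_lt0.
- have := count_split sv; rewrite cnt_below size_map sP count_map.
  by move/addnI => <-; apply: eq_count => p; rewrite /= lin_v subr_gt0.
Qed.

Lemma balanced_lin_neq P t s m a b : balanced P t s m ->
  a \in P -> b \in P -> a != b -> lin t s b - lin t s a != 0.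
Proof.
case=> inj _ _ _ aP bP ab; rewrite subr_eq0.
by apply: contraNneq ab => /(inj _ _ bP aP) ->.
Qed.

End Balancing.

Section Cross.
Local Set Implicit Arguments.
Local Unset Strict Implicit.
Variable R : realFieldType.
Implicit Types (P : seq (point R)) (p q r : point R).

Definition squeeze (t s e : R) p : point R := (lin t s p, e * p.2).

Lemma orient_squeeze (t s e : R) p q r :
  orient (squeeze t s e p) (squeeze t s e q) (squeeze t s e r) = e * orient p q r.
Proof. by rewrite /orient /squeeze /lin /=; ring. Qed.

Lemma squeeze_inj P (t s e : R) :
  {in P &, injective (lin t s)} -> {in P &, injective (squeeze t s e)}.
Proof. by move=> inj a b aP bP [/(inj _ _ aP bP)]. Qed.

Lemma mirror_squeeze_inj P (t s e : R) :
  {in P &, injective (lin t s)} -> {in P &, injective (fun q => mirror (squeeze t s e q))}.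
Proof. by move=> inj a b aP bP /(can_inj mirrorK); apply: (squeeze_inj inj aP bP). Qed.

(* The combined configuration: P1 flattened along the x-axis and P2 along
   the y-axis. *)
Definition cross P1 P2 (t1 s1 t2 s2 e : R) : seq (point R) :=
  [seq squeeze t1 s1 e p | p <- P1] ++ [seq mirror (squeeze t2 s2 e q) | q <- P2].

Definition mixed_signs P1 P2 (t1 s1 t2 s2 e : R) : Prop :=
  (forall a, a \in P1 -> forall b, b \in P1 -> forall r, r \in P2 -> a != b ->
     same_sign (orient (squeeze t1 s1 e a) (squeeze t1 s1 e b) (mirror (squeeze t2 s2 e r)))
               ((lin t1 s1 b - lin t1 s1 a) * lin t2 s2 r)) /\
  (forall p, p \in P1 -> forall q, q \in P2 ->
     squeeze t1 s1 e p != mirror (squeeze t2 s2 e q)).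

(* Each orientation above is a quadratic polynomial in e whose constant term
   is the limit sign, which is nonzero. *)
Lemma mixed_signs_small P1 P2 m1 m2 (t1 s1 t2 s2 : R) :
  balanced P1 t1 s1 m1 -> balanced P2 t2 s2 m2 ->
  for_small (mixed_signs P1 P2 t1 s1 t2 s2).
Proof.
move=> bal1 [_ nz2 _ _]; have [_ nz1 _ _] := bal1; apply: for_small_and.
  apply: for_small_all => a aP; apply: for_small_all => b bP.
  apply: for_small_all => r rP; apply: for_small_imp => ab.
  apply: (@for_small_sign _ _ _
    (lin t1 s1 a * (b.2 - a.2) - (lin t1 s1 b - lin t1 s1 a) * a.2) (- (b.2 - a.2) * r.2)).
    by move=> e; rewrite /orient /squeeze /mirror /=; ring.
  by rewrite mulf_neq0 ?nz2 ?(balanced_lin_neq bal1).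
apply: for_small_all => p pP; apply: for_small_all => q qP.
have := @for_small_sign _ (fun e => lin t1 s1 p + (- q.2 * e + 0 * e ^+ 2)) _ _ _
  (fun e => erefl) (nz1 p pP).
apply: for_small_weaken => e /same_sign_neq0/(_ (nz1 p pP)).
by apply: contraNneq => -[-> _]; rewrite mul0r addr0 mulNr mulrC subrr.
Qed.

Section CrossConfiguration.
Variables (P1 P2 : seq (point R)) (m1 m2 : nat) (t1 s1 t2 s2 e : R).
Hypotheses (gp1 : general_position P1) (gp2 : general_position P2).
Hypotheses (size1 : size P1 = (m1 + m1)%N) (size2 : size P2 = (m2 + m2)%N).
Hypotheses (bal1 : balanced P1 t1 s1 m1) (bal2 : balanced P2 t2 s2 m2).
Hypotheses (e_gt0 : 0 < e).
Hypotheses (mix12 : mixed_signs P1 P2 t1 s1 t2 s2 e).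
Hypotheses (mix21 : mixed_signs P2 P1 t2 s2 t1 s1 e).

Local Notation f := (squeeze t1 s1 e).
Local Notation g := (fun q => mirror (squeeze t2 s2 e q)).
Local Notation C := (cross P1 P2 t1 s1 t2 s2 e).

Lemma sign_ffg a b r : a \in P1 -> b \in P1 -> r \in P2 ->
  same_sign (orient (f a) (f b) (g r)) ((lin t1 s1 b - lin t1 s1 a) * lin t2 s2 r).
Proof.
move=> aP bP rP; have [<-|ab] := eqVneq a b; last exact: mix12.1.
by rewrite orient_pp subrr mul0r.
Qed.

(* Triples with one point from P1 and two from P2, via the reflection. *)
Lemma sign_fgg p q r : p \in P1 -> q \in P2 -> r \in P2 ->
  same_sign (orient (f p) (g q) (g r)) ((lin t2 s2 q - lin t2 s2 r) * lin t1 s1 p).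
Proof.
move=> pP qP rP; have [<-|qr] := eqVneq q r.
  by rewrite orient_cyc orient_pp subrr mul0r.
rewrite orient_cyc -[f p]mirrorK orient_mirror -[_ - _]opprB mulNr.
exact/same_sign_opp/mix21.1.
Qed.

Lemma cross_uniq : uniq C.
Proof.
have [inj1 _ _ _] := bal1; have [inj2 _ _ _] := bal2.
rewrite cat_uniq !map_inj_in_uniq ?(proj1 gp1) ?(proj1 gp2) /=;
  [|exact: mirror_squeeze_inj|exact: squeeze_inj].
rewrite andbT; apply/hasPn => _ /mapP[q qP ->]; apply/mapP => -[p pP /esym/eqP].
by rewrite (negbTE (mix12.2 p pP q qP)).
Qed.

(* Triples inside one part keep their orientation up to the factor +-e; the
   mixed ones have the nonzero limit sign. *)
Lemma cross_general_position : general_position C.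
Proof.
have [_ nz1 _ _] := bal1; have [_ nz2 _ _] := bal2.
have neq_img : forall (h : point R -> point R) x y, h x != h y -> x != y.
  by move=> h x y; apply: contraNneq => ->.
apply: general_position_cat; first exact: cross_uniq.
- move=> _ _ z /mapP[a aP ->] /mapP[b bP ->] + /(neq_img f) ab.
  rewrite mem_cat => /orP[] /mapP[c cP ->].
    move=> /(neq_img f) bc /(neq_img f) ac.
    by rewrite orient_squeeze mulf_neq0 ?(gt_eqF e_gt0) // (proj2 gp1).
  move=> _ _; apply: (same_sign_neq0 (sign_ffg aP bP cP)).
  by rewrite mulf_neq0 ?nz2 ?(balanced_lin_neq bal1).
- move=> _ _ z /mapP[a aP ->] /mapP[b bP ->] + /(neq_img g) ab.
  rewrite mem_cat => /orP[] /mapP[c cP ->].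
    move=> _ _; rewrite orient_cyc orient_cyc.
    apply: (same_sign_neq0 (sign_fgg cP aP bP)).
    by rewrite mulf_neq0 ?nz1 // -opprB oppr_eq0 (balanced_lin_neq bal2).
  move=> /(neq_img g) bc /(neq_img g) ac.
  by rewrite orient_mirror orient_squeeze oppr_eq0 mulf_neq0 ?(gt_eqF e_gt0) // (proj2 gp2).
Qed.

(* A line through two points of P1 has m2 points of P2 on each side, so it
   halves C exactly when it halved P1. *)
Lemma cross_iso_left : iso_onto P1 C [seq f p | p <- P1] f.
Proof.
have [inj1 _ _ _] := bal1; have [_ _ cn2 cp2] := bal2.
have injf : {in P1 &, injective f} by apply: squeeze_inj.
split=> //; split=> // a b aP bP; have m1_gt0 := half_size_gt0 aP size1.
rewrite /halving aP bP !mem_cat !map_f // (inj_in_eq injf) //=.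
have [<-|ab] := eqVneq a b; first by [].
have [Dpos Dneg] := count_scale (balanced_lin_neq bal1 aP bP ab) cn2 cp2.
have [Spos Sneg] := count_same_sign (fun r rP => sign_ffg aP bP rP).
have pos : count (fun x => 0 < orient (f a) (f b) x) C =
           (count (fun x => (0 < orient a b x)%R) P1 + m2)%N.
  rewrite count_cat !count_map -Dpos -Spos; congr addn.
  by apply: eq_count => x /=; rewrite orient_squeeze pmulr_rgt0.
have neg : count (fun x => orient (f a) (f b) x < 0) C =
           (count (fun x => (orient a b x < 0)%R) P1 + m2)%N.
  rewrite count_cat !count_map -Dneg -Sneg; congr addn.
  by apply: eq_count => x /=; rewrite orient_squeeze pmulr_rlt0.
by rewrite pos neg size_cat !size_map size1 size2 !half_shift.
Qed.

(* For the line through f p and g q, with u = lin p and v = lin q, the side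
   of f r is the sign of (u - lin r) * v and the side of g r the sign of
   (v - lin r) * u; at least m1 + m2 points lie on the side of sign u * v. *)
Lemma cross_mixed_not_halving x y :
  x \in [seq f p | p <- P1] -> y \in [seq g q | q <- P2] -> ~~ halving C x y.
Proof.
move=> /mapP[p pP ->] /mapP[q qP ->].
have [_ nz1 cn1 cp1] := bal1; have [_ nz2 cn2 cp2] := bal2.
have m1_gt0 := half_size_gt0 pP size1.
have sign1 r : r \in P1 ->
    same_sign (orient (f p) (g q) (f r)) ((lin t1 s1 p - lin t1 s1 r) * lin t2 s2 q).
  by move=> rP; rewrite orient_cyc orient_cyc; apply: sign_ffg.
have [S1pos S1neg] := count_same_sign sign1.
have [S2pos S2neg] := count_same_sign (fun r rP => sign_fgg pP qP rP).
apply/negP; rewrite /halving size_cat !size_map size1 size2 !count_cat !count_map.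
rewrite S1pos S1neg S2pos S2neg => /and5P[_ _ _ /eqP pos /eqP neg].
have [uv_lt0|uv_gt0] : lin t1 s1 p * lin t2 s2 q < 0 \/ 0 < lin t1 s1 p * lin t2 s2 q.
  by apply/orP; rewrite -neq_lt mulf_neq0 ?nz1 ?nz2.
- apply: (half_excess m1_gt0 _ neg); have vu_lt0 := uv_lt0; rewrite mulrC in vu_lt0.
  rewrite (eq_count (fun r => neg_mul_transfer (lin t1 s1 p - lin t1 s1 r) uv_lt0)).
  rewrite (eq_count (fun r => neg_mul_transfer (lin t2 s2 q - lin t2 s2 r) vu_lt0)).
  by apply: leq_add; apply: count_gap; rewrite ?nz1 ?nz2.
- apply: (half_excess m1_gt0 _ pos); have vu_gt0 := uv_gt0; rewrite mulrC in vu_gt0.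
  rewrite (eq_count (fun r => pos_mul_transfer (lin t1 s1 p - lin t1 s1 r) uv_gt0)).
  rewrite (eq_count (fun r => pos_mul_transfer (lin t2 s2 q - lin t2 s2 r) vu_gt0)).
  by apply: leq_add; apply: count_gap; rewrite ?nz1 ?nz2.
Qed.

End CrossConfiguration.

Lemma cross_mirror (P1 P2 : seq (point R)) (t1 s1 t2 s2 e : R) :
  perm_eq (map mirror (cross P2 P1 t2 s2 t1 s1 e)) (cross P1 P2 t1 s1 t2 s2 e).
Proof.
rewrite /cross map_cat (map_comp mirror (squeeze t1 s1 e)) (mapK mirrorK).
by rewrite perm_catC -map_comp.
Qed.

(* The statement for P2 follows from cross_iso_left for the swapped
   configuration, transported by the reflection. *)
Lemma cross_iso_right (P1 P2 : seq (point R)) (m1 m2 : nat) (t1 s1 t2 s2 e : R) :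
  size P1 = (m1 + m1)%N -> size P2 = (m2 + m2)%N ->
  balanced P1 t1 s1 m1 -> balanced P2 t2 s2 m2 -> 0 < e ->
  mixed_signs P2 P1 t2 s2 t1 s1 e ->
  iso_onto P2 (cross P1 P2 t1 s1 t2 s2 e)
    [seq mirror (squeeze t2 s2 e q) | q <- P2] (fun q => mirror (squeeze t2 s2 e q)).
Proof.
move=> size1 size2 bal1 bal2 e_gt0 mix21.
have [inj2 _ _ _] := bal2.
have [_ [_ iso]] := cross_iso_left size2 size1 bal2 bal1 e_gt0 mix21.
split; first exact: mirror_squeeze_inj.
split=> // a b aP bP.
by rewrite -(halving_perm _ _ (cross_mirror P1 P2 t1 s1 t2 s2 e)) halving_mirror iso.
Qed.

End Cross.

Theorem mainTheorem1 (R : realFieldType) (P1 P2 : seq (point R)) :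
  general_position P1 -> general_position P2 ->
  ~~ odd (size P1) -> ~~ odd (size P2) ->
  exists (P Q1 Q2 : seq (point R)),
    general_position P /\
    size P = (size P1 + size P2)%N /\
    perm_eq P (Q1 ++ Q2) /\
    (forall a b, a \in Q1 -> b \in Q2 -> ~~ halving P a b) /\
    (exists f, iso_onto P1 P Q1 f) /\
    (exists g, iso_onto P2 P Q2 g).
Proof.
move=> gp1 gp2 even1 even2.
have size1 : size P1 = ((size P1)./2 + (size P1)./2)%N by rewrite addnn even_halfK.
have size2 : size P2 = ((size P2)./2 + (size P2)./2)%N by rewrite addnn even_halfK.
have [t1 [s1 bal1]] := exists_balanced (proj1 gp1) size1.
have [t2 [s2 bal2]] := exists_balanced (proj1 gp2) size2.
have [e e_gt0 small_e] :=
  for_small_and (mixed_signs_small bal1 bal2) (mixed_signs_small bal2 bal1).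
have [mix12 mix21] := small_e e e_gt0 (lexx e).
exists (cross P1 P2 t1 s1 t2 s2 e), [seq squeeze t1 s1 e p | p <- P1],
  [seq mirror (squeeze t2 s2 e q) | q <- P2].
split; first exact: cross_general_position gp1 gp2 bal1 bal2 e_gt0 mix12 mix21.
split; first by rewrite size_cat !size_map.
split; first exact: perm_refl.
split; first exact: cross_mixed_not_halving size1 size2 bal1 bal2 mix12 mix21.
split; first exists (squeeze t1 s1 e).
  exact: cross_iso_left size1 size2 bal1 bal2 e_gt0 mix12.
exists (fun q => mirror (squeeze t2 s2 e q)).
exact: cross_iso_right size1 size2 bal1 bal2 e_gt0 mix21.
Qed.
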